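(* Let $G$ be a connected graph on $n$ vertices with maximum degree $\Delta\geq 2$. Then \[ \log_\Delta\Big(\frac{n+1}{2}\Big)\leq \operatorname{cdim}(G). \]
   Context: All graphs are finite, simple, undirected and nonempty. For distinct vertices $v,w$, $\kappa(v,w)$ is the maximum number of internally vertex-disjoint $v$–$w$ paths (an edge $vw$ counts as one such path); $\kappa(v,v)=\infty$. For an ordered vertex set $W=(w_1,\ldots,w_k)$, $r_G(v,W)=[\kappa(v,w_1),\ldots,\kappa(v,w_k)]$. $W$ is resolving if $r_G(v_1,W)=r_G(v_2,W)$ implies $v_1=v_2$. The connectivity dimension $\operatorname{cdim}(G)$ is the minimum cardinality of a resolving set. *)

From mathcomp Require Import all_boot.
From mathcomp Require Import boolp.
From Stdlib Require Import Reals.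

Set Implicit Arguments.
Unset Strict Implicit.
Unset Printing Implicit Defensive.

Section Graphs.
Variable T : finType.
Variable e : rel T.

Definition simple_graph : Prop := symmetric e /\ irreflexive e.

Definition connected_graph : Prop := forall x y : T, connect e x y.

Definition deg (v : T) : nat := #|[set w | e v w]|.
Definition max_degree : nat := \max_(v : T) deg v.

Definition is_path (v w : T) (p : seq T) : bool :=
  [&& path e v p, last v p == w & uniq (v :: p)].

(* internal vertices of the path v :: p (all except the two ends) *)
Definition internal (v : T) (p : seq T) : seq T := behead (belast v p).

Definition disjoint_family (v w : T) (F : seq (seq T)) : bool :=
  [&& uniq F, all (is_path v w) F &
      pairwise (fun p q => ~~ has (mem (internal v q)) (internal v p)) F].

(* kappa v w (v <> w): maximum number of internally vertex-disjoint v–w paths.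
   Such a family has at most #|T| + 1 members (at most one path without internal
   vertices, the others have nonempty pairwise disjoint internal vertex sets), so
   the maximum over k < #|T| + 2 is the true maximum. *)
Definition kappa_fin (v w : T) : nat :=
  \max_(k < #|T|.+2 | `[< exists F, disjoint_family v w F /\ size F = k >]) k.

(* kappa with kappa(v,v) = infinity, encoded as None. *)
Definition kappa (v w : T) : option nat :=
  if v == w then None else Some (kappa_fin v w).

(* Resolving set; the representation r(v,W) is compared coordinatewise, so the
   order of W is irrelevant and W is taken as a set. *)
Definition resolving (W : {set T}) : bool :=
  [forall v1, forall v2,
     [forall w in W, kappa v1 w == kappa v2 w] ==> (v1 == v2)].

(* Connectivity dimension: minimum cardinality of a resolving set
   ([set: T] is always resolving, so #|T| is a safe initial value). *)
Definition cdim : nat := \big[minn/#|T|]_(W : {set T} | resolving W) #|W|.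

End Graphs.

(* For a resolving set W, the vectors [(kappa v w)_(w in W)] separate the vertices
   outside W.  For v outside W every coordinate lies in [1, Delta]: a path to w
   exists by connectedness, and internally disjoint v-w paths leave v through
   distinct neighbours.  Hence n - |W| <= Delta^|W|, and since |W| < Delta^|W|
   this gives (n + 1)/2 <= Delta^cdim. *)
From mathcomp Require Import all_boot.
From mathcomp Require Import boolp.
From Stdlib Require Import Reals Lra.
(* Reals redeclares Peano notations in nat_scope; restore ssrnat's. *)
Import ssrnat.

Set Implicit Arguments.
Unset Strict Implicit.
Unset Printing Implicit Defensive.

Section ConnectivityDimension.
Variable T : finType.
Variable e : rel T.

Lemma is_path_first_step v w p : v != w -> is_path e v w p ->
  exists h p', [/\ p = h :: p', e v h, (h == w -> p' = [::]) &
                   (h != w -> h \in internal v p)].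
Proof.
case: p => [|h p'] vw /and3P [pth lst un].
  by move: lst => /= /eqP lst; rewrite lst eqxx in vw.
exists h, p'; move: pth => /= /andP [evh pth]; split => //.
- move=> /eqP hw; case: p' lst un {pth} => [//|a q] /= /eqP lst.
  move=> /andP [_ /andP [hn _]].
  by have := mem_last a q; rewrite lst -hw (negbTE hn).
- move=> hw; case: p' lst {un pth} => [|a q] /= /eqP lst.
    by rewrite lst eqxx in hw.
  by rewrite /internal /= inE eqxx.
Qed.

Lemma disjoint_family_size_le_deg v w F :
  v != w -> disjoint_family e v w F -> size F <= deg e v.
Proof.
move=> vw /and3P [uF allF pw].
have [uniq_heads heads_adj] :
    uniq (map (head v) F) /\ all (fun p => e v (head v p)) F.
  elim: F uF allF pw => [|p F IH] //= /andP [pF uF] /andP [pp allF] /andP [pF_disj pw].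
  have [-> ->] := IH uF allF pw.
  have [h [p' [ep evh hw_end hw_int]]] := is_path_first_step vw pp.
  subst p.
  rewrite /= evh !andbT; split => //; apply/negP => /mapP [q qF].
  have [h' [q' [eq_q _ hw_end' hw_int']]] := is_path_first_step vw (allP allF q qF).
  rewrite eq_q /= => h_eq; subst h'.
  have [/eqP hw | hw] := eqVneq h w.
    by move: pF; rewrite (hw_end hw) -(hw_end' hw) -eq_q qF.
  move/allP: pF_disj => /(_ q qF) /negP; apply; apply/hasP.
  by exists h; [exact: hw_int | exact: hw_int'].
rewrite -(size_map (head v)) -(card_uniqP uniq_heads) /deg.
apply: subset_leq_card; apply/subsetP => x /mapP [p pF ->].
by rewrite inE (allP heads_adj p pF).
Qed.

Lemma kappa_fin_le_deg v w : v != w -> kappa_fin e v w <= deg e v.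
Proof.
move=> vw; apply/bigmax_leqP => k /asboolP [F [dF <-]].
exact: disjoint_family_size_le_deg dF.
Qed.

Lemma kappa_fin_gt0 v w : connect e v w -> v != w -> 0 < kappa_fin e v w.
Proof.
move=> /connectP [p pp ->] vw.
have [p' pp' up' _] := shortenP pp.
apply: (leq_trans _ (leq_bigmax_cond (Ordinal (isT : 1 < #|T|.+2)) _)) => //.
apply/asboolP; exists [:: p']; split => //.
by rewrite /disjoint_family /= !andbT /is_path pp' up' eqxx.
Qed.

Lemma deg_le_max_degree v : deg e v <= max_degree e.
Proof. exact: (@leq_bigmax T (deg e) v). Qed.

Lemma resolving_setT : resolving e [set: T].
Proof.
apply/forallP => v1; apply/forallP => v2; apply/implyP => /forallP /(_ v1).
by rewrite in_setT /= /kappa eqxx; case: (eqVneq v2 v1).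
Qed.

Lemma cdim_attained : exists2 W, resolving e W & #|W| = cdim e.
Proof.
apply: (big_ind (fun m => exists2 W, resolving e W & #|W| = m)).
- by exists [set: T]; rewrite ?cardsT //; apply: resolving_setT.
- by move=> m1 m2 [W1 r1 c1] [W2 r2 c2]; rewrite /minn; case: ltnP;
    [exists W1 | exists W2].
- by move=> W rW; exists W.
Qed.

Lemma resolving_kappa_fin_inj W v1 v2 : resolving e W ->
  v1 \notin W -> v2 \notin W ->
  {in W, forall w, kappa_fin e v1 w = kappa_fin e v2 w} -> v1 = v2.
Proof.
move=> /forallP /(_ v1) /forallP /(_ v2) /implyP res v1W v2W eq_kappa.
apply/eqP/res/forallP => w; apply/implyP => wW.
have v1w : v1 != w by apply: contraNneq v1W => ->.
have v2w : v2 != w by apply: contraNneq v2W => ->.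
by rewrite /kappa (negbTE v1w) (negbTE v2w) eq_kappa.
Qed.

Lemma card_le_resolving_add_exp d W :
  connected_graph e -> max_degree e = d.+1 -> resolving e W ->
  #|T| <= #|W| + d.+1 ^ #|W|.
Proof.
move=> con maxd rW.
pose code v : {ffun 'I_#|W| -> 'I_d.+1} :=
  [ffun i => inord (kappa_fin e v (enum_val i)).-1].
have code_inj : {in ~: W &, injective code}.
  move=> v1 v2; rewrite !inE => v1W v2W eq_code.
  apply: (resolving_kappa_fin_inj rW v1W v2W) => w wW.
  have kappa_bounds v : v \notin W -> 0 < kappa_fin e v w <= d.+1.
    move=> vW; have vw : v != w by apply: contraNneq vW => ->.
    rewrite kappa_fin_gt0 ?con //= -maxd.
    exact: leq_trans (kappa_fin_le_deg vw) (deg_le_max_degree v).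
  have /andP [pos1 le1] := kappa_bounds v1 v1W.
  have /andP [pos2 le2] := kappa_bounds v2 v2W.
  have := congr1 (fun f : {ffun 'I_#|W| -> 'I_d.+1} => val (f (enum_rank_in wW w)))
    eq_code.
  rewrite !ffunE enum_rankK_in //= !inordK ?prednK // => eq_pred.
  by rewrite -(prednK pos1) -(prednK pos2) eq_pred.
have : #|~: W| <= d.+1 ^ #|W|.
  rewrite -(card_in_imset code_inj).
  by apply: leq_trans (max_card _) _; rewrite card_ffun !card_ord.
by rewrite -(cardsC W) leq_add2l.
Qed.

End ConnectivityDimension.

Lemma INR_expn m k : INR (m ^ k) = pow (INR m) k.
Proof. by elim: k => [|k IH] //; rewrite expnS mult_INR IH. Qed.

Lemma log_half_succ_le n k D : 1 < D -> n <= k + D ^ k ->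
  (ln ((INR n + 1) / 2) / ln (INR D) <= INR k)%R.
Proof.
move=> D_gt1 n_le.
have /leP : n.+1 <= 2 * D ^ k.
  rewrite mul2n -addnn (leq_trans _ (leq_add (ltn_expl k D_gt1) (leqnn _))) //.
move=> /le_INR; rewrite S_INR mult_INR INR_expn /= => n_succ_le.
have /lt_INR /= D_gt1R : (1 < D)%coq_nat by apply/ltP.
have lnD_pos : (0 < ln (INR D))%R by rewrite -ln_1; apply: ln_increasing; lra.
have half_pos : (0 < (INR n + 1) / 2)%R by have := pos_INR n; lra.
have ln_half_le : (ln ((INR n + 1) / 2) <= INR k * ln (INR D))%R.
  rewrite -ln_pow; last lra.
  have half_le : ((INR n + 1) / 2 <= INR D ^ k)%R by lra.
  have [half_lt | ->] := Rle_lt_or_eq_dec _ _ half_le.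
  - exact/Rlt_le/ln_increasing.
  - exact: Rle_refl.
apply: (Rmult_le_reg_r _ _ _ lnD_pos).
by rewrite /Rdiv Rmult_assoc Rinv_l ?Rmult_1_r //; lra.
Qed.

Theorem mainTheorem4 (T : finType) (e : rel T) :
  simple_graph e -> connected_graph e -> (2 <= max_degree e)%N ->
  (ln ((INR #|T| + 1) / 2) / ln (INR (max_degree e)) <= INR (cdim e))%R.
Proof.
move=> _ con maxd_ge2.
have [d maxd] : exists d, max_degree e = d.+1.
  by exists (max_degree e).-1; rewrite prednK // ltnW.
have [W rW <-] := cdim_attained e.
apply: log_half_succ_le => //; rewrite maxd.
exact: card_le_resolving_add_exp con maxd rW.
Qed.
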